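(* The price of anarchy (supremum over all weights $w_1,w_2\ge0$ with $w_1+w_2>0$ and all instances, with respect to pure Nash equilibria) for symmetric simultaneous two-player weighted congestion games with affine costs and uniform cost functions is equal to $2$.
   Context: A weighted two-player congestion game with affine costs consists of a finite set $R$ of resources, coefficients $\alpha_r,\beta_r \geq 0$ for each $r\in R$, two players $i=1,2$ with weights $w_i\ge 0$, and for each player $i$ a nonempty finite set $\mathcal{A}_i \subseteq 2^R$ of actions; it is symmetric if $\mathcal{A}_1=\mathcal{A}_2$. For an action profile $A=(A_1,A_2)$ the load of $r$ is $x_r(A)=\sum_{j:\, r\in A_j} w_j$. With uniform costs, player $i$ pays $C_i(A)=\sum_{r\in A_i}(\alpha_r+\beta_r x_r(A))$. The social cost is $C(A)=C_1(A)+C_2(A)$. A pure Nash equilibrium is a profile from which no player can lower her cost by unilaterally changing her action. The price of anarchy of an instance is the maximum over Nash equilibria $A$ of $C(A)/\min_{A'} C(A')$; the price of anarchy of a class is the supremum over all instances (with positive optimal social cost). *)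

From HB Require Import structures.
From mathcomp Require Import all_boot all_order all_algebra.
From mathcomp Require Import reals.
Set Implicit Arguments. Unset Strict Implicit. Unset Printing Implicit Defensive.
Import Order.TTheory GRing.Theory Num.Theory.
Local Open Scope ring_scope.

Section WCG.
Variables (R : realType) (T : finType).
Variables (alpha beta : T -> R) (w1 w2 : R).

Definition load (A1 A2 : {set T}) (r : T) : R :=
  (if r \in A1 then w1 else 0) + (if r \in A2 then w2 else 0).

Definition cost1 (A1 A2 : {set T}) : R :=
  \sum_(r in A1) (alpha r + beta r * load A1 A2 r).
Definition cost2 (A1 A2 : {set T}) : R :=
  \sum_(r in A2) (alpha r + beta r * load A1 A2 r).
Definition social (A1 A2 : {set T}) : R := cost1 A1 A2 + cost2 A1 A2.

(* symmetric game: both players have action set Acts *)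
Definition is_pure_NE (Acts : {set {set T}}) (A1 A2 : {set T}) : Prop :=
  [/\ A1 \in Acts, A2 \in Acts,
      (forall B, B \in Acts -> cost1 A1 A2 <= cost1 B A2)
    & forall B, B \in Acts -> cost2 A1 A2 <= cost2 A1 B].

Definition is_optimum (Acts : {set {set T}}) (O1 O2 : {set T}) : Prop :=
  [/\ O1 \in Acts, O2 \in Acts
    & forall B1 B2, B1 \in Acts -> B2 \in Acts -> social O1 O2 <= social B1 B2].
End WCG.

Definition valid_instance (R : realType) (T : finType) (alpha beta : T -> R)
    (w1 w2 : R) (Acts : {set {set T}}) : Prop :=
  (forall r, 0 <= alpha r) /\ (forall r, 0 <= beta r) /\
  0 <= w1 /\ 0 <= w2 /\ 0 < w1 + w2 /\ Acts != set0.

Definition poa_upper_bound (R : realType) (c : R) : Prop :=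
  forall (T : finType) (alpha beta : T -> R) (w1 w2 : R) (Acts : {set {set T}})
    (A1 A2 O1 O2 : {set T}),
    valid_instance alpha beta w1 w2 Acts ->
    is_pure_NE alpha beta w1 w2 Acts A1 A2 ->
    is_optimum alpha beta w1 w2 Acts O1 O2 ->
    0 < social alpha beta w1 w2 O1 O2 ->
    social alpha beta w1 w2 A1 A2 / social alpha beta w1 w2 O1 O2 <= c.

From HB Require Import structures.
From mathcomp Require Import all_boot all_order all_algebra.
From mathcomp Require Import reals.
From mathcomp Require Import lra.
Import Order.TTheory GRing.Theory Num.Theory.
Local Open Scope ring_scope.

(* Upper bound: let each player deviate to both optimal actions (allowed since
   the game is symmetric), weighting the deviation to O_j by w_j.  Resource by
   resource, these weighted deviation costs add up to at most 2 (w1 + w2) C(O),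
   while at an equilibrium each of them dominates the corresponding
   equilibrium cost, so (w1 + w2) C(A) <= 2 (w1 + w2) C(O).
   Lower bound: a Pigou network in which a weightless player sits on the
   congestible resource; the equilibrium where the other player joins it
   costs 2, while sending that player to the constant resource costs 1. *)

Section SmoothnessBound.
Context {R : realType} {T : finType} {alpha beta : T -> R} {w1 w2 : R}.
Hypotheses (alpha_ge0 : forall r, 0 <= alpha r) (beta_ge0 : forall r, 0 <= beta r).
Hypotheses (w1_ge0 : 0 <= w1) (w2_ge0 : 0 <= w2).

Definition cost1_at (B1 B2 : {set T}) (r : T) : R :=
  if r \in B1 then alpha r + beta r * load w1 w2 B1 B2 r else 0.
Definition cost2_at (B1 B2 : {set T}) (r : T) : R :=
  if r \in B2 then alpha r + beta r * load w1 w2 B1 B2 r else 0.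

Lemma cost1E B1 B2 : cost1 alpha beta w1 w2 B1 B2 = \sum_r cost1_at B1 B2 r.
Proof. exact: big_mkcond. Qed.

Lemma cost2E B1 B2 : cost2 alpha beta w1 w2 B1 B2 = \sum_r cost2_at B1 B2 r.
Proof. exact: big_mkcond. Qed.

Lemma weighted_deviation_le_at (A1 A2 O1 O2 : {set T}) r :
  w1 * cost1_at O1 A2 r + w2 * cost1_at O2 A2 r
    + w1 * cost2_at A1 O1 r + w2 * cost2_at A1 O2 r
  <= 2 * (w1 + w2) * (cost1_at O1 O2 r + cost2_at O1 O2 r).
Proof.
have a_ge0 := alpha_ge0 r; have b_ge0 := beta_ge0 r.
have := mulr_ge0 a_ge0 w1_ge0; have := mulr_ge0 a_ge0 w2_ge0.
have := mulr_ge0 (mulr_ge0 b_ge0 w1_ge0) w1_ge0.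
have := mulr_ge0 (mulr_ge0 b_ge0 w1_ge0) w2_ge0.
have := mulr_ge0 (mulr_ge0 b_ge0 w2_ge0) w2_ge0.
rewrite /cost1_at /cost2_at /load.
by case: (r \in A1); case: (r \in A2); case: (r \in O1); case: (r \in O2);
  nra.
Qed.

Lemma weighted_deviation_le (A1 A2 O1 O2 : {set T}) :
  w1 * cost1 alpha beta w1 w2 O1 A2 + w2 * cost1 alpha beta w1 w2 O2 A2
    + w1 * cost2 alpha beta w1 w2 A1 O1 + w2 * cost2 alpha beta w1 w2 A1 O2
  <= 2 * (w1 + w2) * social alpha beta w1 w2 O1 O2.
Proof.
rewrite /social !cost1E !cost2E -big_split /= !mulr_sumr -!big_split /=.
by apply: ler_sum => r _; apply: weighted_deviation_le_at.
Qed.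

Lemma social_NE_le2 {Acts : {set {set T}}} {A1 A2 O1 O2 : {set T}} :
  0 < w1 + w2 -> is_pure_NE alpha beta w1 w2 Acts A1 A2 ->
  O1 \in Acts -> O2 \in Acts ->
  social alpha beta w1 w2 A1 A2 <= 2 * social alpha beta w1 w2 O1 O2.
Proof.
move=> w_gt0 [_ _ NE1 NE2] O1_act O2_act.
rewrite -(ler_pM2l w_gt0) mulrA [_ * 2]mulrC.
apply: le_trans (weighted_deviation_le A1 A2 O1 O2).
have := ler_wpM2l w1_ge0 (NE1 _ O1_act); have := ler_wpM2l w2_ge0 (NE1 _ O2_act).
have := ler_wpM2l w1_ge0 (NE2 _ O1_act); have := ler_wpM2l w2_ge0 (NE2 _ O2_act).
rewrite /social; lra.
Qed.

End SmoothnessBound.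

Lemma poa_upper_bound2 (R : realType) : poa_upper_bound (2 : R).
Proof.
move=> T alpha beta w1 w2 Acts A1 A2 O1 O2 [alpha_ge0 [beta_ge0 [w1_ge0 [w2_ge0
  [w_gt0 _]]]]] NE [O1_act O2_act _] opt_gt0.
rewrite ler_pdivrMr //.
exact: (social_NE_le2 alpha_ge0 beta_ge0 w1_ge0 w2_ge0 w_gt0 NE O1_act O2_act).
Qed.

Section Pigou.
Variable R : realType.

Definition pigou_alpha (r : bool) : R := if r then 0 else 1.
Definition pigou_beta (r : bool) : R := if r then 1 else 0.
Definition pigou_acts : {set {set bool}} := [set [set true]; [set false]].

Notation pcost1 := (cost1 pigou_alpha pigou_beta 0 1).
Notation pcost2 := (cost2 pigou_alpha pigou_beta 0 1).
Notation psocial := (social pigou_alpha pigou_beta 0 1).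

Lemma pigou_actsP B : B \in pigou_acts -> exists x, B = [set x].
Proof. by rewrite !inE => /orP[] /eqP ->; eexists. Qed.

Lemma pigou_cost1 x y : pcost1 [set x] [set y] = if x && ~~ y then 0 else 1.
Proof.
rewrite /cost1 /load big_set1 !inE eqxx /pigou_alpha /pigou_beta.
by case: x; case: y => /=; lra.
Qed.

Lemma pigou_cost2 x y : pcost2 [set x] [set y] = 1.
Proof.
rewrite /cost2 /load big_set1 !inE eqxx /pigou_alpha /pigou_beta.
by case: x; case: y => /=; lra.
Qed.

Lemma pigou_social x y : psocial [set x] [set y] = if x && ~~ y then 1 else 2.
Proof. by rewrite /social pigou_cost1 pigou_cost2; case: (x && ~~ y); lra. Qed.

Lemma pigou_valid : valid_instance pigou_alpha pigou_beta 0 1 pigou_acts.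
Proof.
rewrite /valid_instance lexx ler01 add0r ltr01.
do 5?split=> //; try by case.
by apply/set0Pn; exists [set true]; rewrite !inE eqxx.
Qed.

Lemma pigou_NE : is_pure_NE pigou_alpha pigou_beta 0 1 pigou_acts
  [set true] [set true].
Proof.
split; rewrite ?inE ?eqxx //.
- by move=> _ /pigou_actsP[x ->]; rewrite !pigou_cost1; case: x.
- by move=> _ /pigou_actsP[x ->]; rewrite !pigou_cost2.
Qed.

Lemma pigou_opt : is_optimum pigou_alpha pigou_beta 0 1 pigou_acts
  [set true] [set false].
Proof.
split; rewrite ?inE ?eqxx ?orbT //.
move=> _ _ /pigou_actsP[x ->] /pigou_actsP[y ->]; rewrite !pigou_social /=.
by case: (x && ~~ y); lra.
Qed.

Lemma poa_lower_bound2 (c : R) : c < 2 -> ~ poa_upper_bound c.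
Proof.
move=> c_lt2 /(_ _ _ _ _ _ _ _ _ _ _ pigou_valid pigou_NE pigou_opt).
rewrite !pigou_social /= divr1 => /(_ ltr01); lra.
Qed.

End Pigou.

Theorem corollary3 (R : realType) :
  poa_upper_bound (2 : R) /\ (forall c : R, c < 2 -> ~ poa_upper_bound c).
Proof. by split; [exact: poa_upper_bound2 | exact: poa_lower_bound2]. Qed.
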